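(* Let $n_1,n_2$ be distinct odd primes with $\gcd(n_1-1,n_2-1)=6$, $n=n_1n_2$, and let $D_0,\dots,D_5$ be the Whiteman generalized cyclotomic classes of order 6 modulo $n$ (see context). Let $q$ be a prime power with $\gcd(q,n)=1$, let $m$ be the order of $q$ modulo $n$, $\alpha$ a primitive element of $\mathrm{GF}(q^m)$ and $\beta=\alpha^{(q^m-1)/n}$. Let $N_1=\{n_1,\dots,(n_2-1)n_1\}$ and $S(x)=\sum_{i\in N_1\cup D_0\cup D_1\cup D_2}x^i$, $T(x)=\sum_{i\in N_1\cup D_1\cup D_2\cup D_3}x^i$, $M(x)=\sum_{i\in N_1\cup D_2\cup D_3\cup D_4}x^i$ in $\mathrm{GF}(q)[x]$. Then: (I) if $q\bmod n\in D_1\cup D_3\cup D_5$, then $S(\beta),T(\beta),M(\beta)\notin\{-1,0\}$; (II) if $q\bmod n\in D_0$, then $S(\beta)^q=S(\beta)$, $T(\beta)^q=T(\beta)$, $M(\beta)^q=M(\beta)$; (III) if $q\bmod n\in D_2\cup D_4$, then $S(\beta)^{q^3}=S(\beta)$, $T(\beta)^{q^3}=T(\beta)$, $M(\beta)^{q^3}=M(\beta)$.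
   Context: Let $e=(n_1-1)(n_2-1)/6$, $g$ a common primitive root of $n_1$ and $n_2$, $u$ an integer with $u\equiv g\pmod{n_1}$, $u\equiv 1\pmod{n_2}$, and $D_i=\{g^su^i\bmod n: s=0,\dots,e-1\}$ for $i=0,\dots,5$; these partition $\mathbb{Z}_n^*$. *)

From mathcomp Require Import all_boot all_order all_algebra all_field.
Set Implicit Arguments. Unset Strict Implicit. Unset Printing Implicit Defensive.
Import GRing.Theory.

Definition is_primroot (g p : nat) : Prop :=
  (g ^ p.-1 = 1 %[mod p]) /\ (forall k, 0 < k < p.-1 -> g ^ k != 1 %[mod p]).

Definition is_ord_mod (q n m : nat) : Prop :=
  0 < m /\ (q ^ m = 1 %[mod n]) /\ (forall k, 0 < k < m -> q ^ k != 1 %[mod n]).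

Definition wh_e (n1 n2 : nat) : nat := ((n1.-1) * (n2.-1)) %/ 6.

Definition whD (n1 n2 g u i : nat) : seq nat :=
  [seq (g ^ s * u ^ i) %% (n1 * n2) | s <- iota 0 (wh_e n1 n2)].

Definition whN1 (n1 n2 : nat) : seq nat := [seq k * n1 | k <- iota 1 n2.-1].

(* sum_{i in A, 0 <= i < n} beta^i, i.e. the evaluation at beta of the
   0/1-coefficient polynomial sum_{i in A} x^i (A a subset of {0..n-1}). *)
Definition evsum (F : fieldType) (beta : F) (n : nat) (A : pred nat) : F :=
  \sum_(i < n | A i) beta ^+ i.

From mathcomp Require Import all_boot all_order all_algebra all_field.
From mathcomp Require Import zify.
Import GRing.Theory.
Set Implicit Arguments. Unset Strict Implicit.

(* Modulo n, multiplication by g permutes each class D_i and multiplication   *)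
(* by u maps D_i onto D_(i+1), indices being read modulo 6 because u^6 is a   *)
(* power of g. Multiplication by a unit also permutes N_1. Hence, for q in    *)
(* D_k, the Frobenius x |-> x^q sends the sum of beta^i over                  *)
(* N_1 u D_a u D_(a+1) u D_(a+2) to the same sum with a replaced by a + k.    *)
(* This gives (II), and (III) since q^3 lies in D_0 when k is even. For k     *)
(* odd, q^3 lies in D_3, so S + S^(q^3) is the sum over N_1 plus the sum over *)
(* N_1 and all six classes. The classes cover the units (they are disjoint,   *)
(* each has e elements and phi(n) = 6e), so the latter is the sum over all i  *)
(* not divisible by n2, which vanishes, while the sum over N_1 is -1. Thus    *)
(* S + S^(q^3) = -1, which rules out S = 0 and S = -1.                        *)

Lemma eqn_modMr_coprime Q n x y :
  coprime Q n -> (x * Q == y * Q %[mod n]) = (x == y %[mod n]).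
Proof.
move=> coQ; wlog le_yx : x y / y <= x.
  move=> W; have [/W //|/ltnW/W E] := leqP y x.
  by rewrite eq_sym E eq_sym.
rewrite !eqn_mod_dvd ?leq_mul2r ?le_yx ?orbT // -mulnBl Gauss_dvdl //.
by rewrite coprime_sym.
Qed.

Lemma expn_mod_order g d M a : g ^ d = 1 %[mod M] -> g ^ a = g ^ (a %% d) %[mod M].
Proof.
move=> gd1; rewrite {1}(divn_eq a d) expnD (mulnC (a %/ d)) expnM -modnMml -modnXm gd1.
by rewrite modnXm exp1n modnMml mul1n.
Qed.

Lemma primroot_coprime g p : prime p -> is_primroot g p -> coprime g p.
Proof.
move=> p_pr [gp1 _]; rewrite coprime_sym prime_coprime //; apply: contraPN gp1.
rewrite /dvdn => /eqP g0; rewrite -modnXm g0 exp0n ?ltn_predRL ?prime_gt1 //.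
by rewrite mod0n modn_small ?prime_gt1.
Qed.

Lemma primroot_expE g p x y : prime p -> is_primroot g p ->
  (g ^ x == g ^ y %[mod p]) = (x == y %[mod p.-1]).
Proof.
move=> p_pr g_pr; have [gp1 g_min] := g_pr.
apply/idP/idP => [|/eqP xy]; last by rewrite (expn_mod_order x gp1) xy -expn_mod_order.
wlog le_yx : x y / y <= x.
  move=> W; have [/W //|/ltnW/W] := leqP y x.
  by rewrite eq_sym => W' /W'; rewrite eq_sym.
rewrite -(subnKC le_yx) expnD -[X in _ == X %[mod p]]muln1 mulnC.
rewrite (mulnC (g ^ y)) eqn_modMr_coprime ?coprimeXl ?primroot_coprime // => gxy1.
rewrite eqn_mod_dvd ?leq_addr // addKn /dvdn; apply: contraLR gxy1.
rewrite (expn_mod_order _ gp1) -lt0n => r_gt0.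
by rewrite g_min // r_gt0 ltn_mod ltn_predRL prime_gt1.
Qed.

Lemma eqmod_dvd d m a b : d %| m -> a = b %[mod m] -> a = b %[mod d].
Proof. by move=> dm ab; rewrite -(modn_dvdm a dm) ab modn_dvdm. Qed.

Lemma chinese_remainder_lcm m1 m2 x y :
  (x == y %[mod lcmn m1 m2]) = (x == y %[mod m1]) && (x == y %[mod m2]).
Proof.
wlog le_yx : x y / y <= x.
  move=> W; have [/W //|/ltnW/W] := leqP y x.
  by rewrite eq_sym => ->; rewrite !(eq_sym (y %% _)).
by rewrite !eqn_mod_dvd // dvdn_lcm.
Qed.

Lemma mem_map_muln d (s : seq nat) x : 0 < d ->
  (x \in [seq k * d | k <- s]) = (d %| x) && (x %/ d \in s).
Proof.
move=> d_gt0; apply/mapP/andP => [[k k_in ->] | [/dvdnP [k ->]]].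
  by rewrite dvdn_mull // mulnK.
by rewrite mulnK // => k_in; exists k.
Qed.

Lemma expr_sum_pchar (R : comNzRingType) (I : Type) (r : seq I) (P : pred I)
    (E : I -> R) Q :
  [pchar R]%R.-nat Q -> ((\sum_(i <- r | P i) E i) ^+ Q = \sum_(i <- r | P i) E i ^+ Q)%R.
Proof.
move=> QP; have Q_gt0 : 0 < Q by case/andP: QP.
apply: (big_morph (fun x => x ^+ Q)%R) => [x y|]; first exact: exprDn_pchar.
by rewrite expr0n eqn0Ngt Q_gt0.
Qed.

Lemma count_coprime_iota n : count (coprime^~ n) (iota 0 n) = totient n.
Proof.
rewrite totient_count_coprime /index_iota subn0 -sumn_count sumnE big_map.
by apply: eq_bigr => y _; rewrite coprime_sym.
Qed.

Section EvaluationSums.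

Variables (F : fieldType) (b : F).
Local Open Scope ring_scope.

Lemma sum_expr_eq0 (z : F) k : z ^+ k = 1 -> z != 1 -> \sum_(i < k) z ^+ i = 0.
Proof.
move=> zk z1; have /esym/eqP := subrX1 z k.
by rewrite zk subrr mulf_eq0 subr_eq0 (negPf z1) => /eqP.
Qed.

Lemma add_expr_eqN1_nontrivial (x : F) r :
  (0 < r)%N -> x + x ^+ r = -1 -> x != -1 /\ x != 0.
Proof.
move=> r_gt0 xE; split; apply/eqP => x_eq; move: xE; rewrite x_eq.
  rewrite -[RHS]addr0 => /addrI /eqP.
  by rewrite expf_eq0 oppr_eq0 oner_eq0 andbF.
rewrite expr0n eqn0Ngt r_gt0 addr0 => /eqP.
by rewrite eq_sym oppr_eq0 oner_eq0.
Qed.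

Lemma evsum_seq n (P : pred nat) (s : seq nat) :
  uniq s -> (forall x, (x \in s) = (x < n)%N && P x) ->
  evsum b n P = \sum_(x <- s) b ^+ x.
Proof.
move=> s_uniq s_mem; rewrite /evsum -(big_mkord P (fun i => b ^+ i)) -big_filter.
apply: perm_big; apply: uniq_perm; rewrite ?filter_uniq ?iota_uniq //.
by move=> x; rewrite mem_filter mem_iota subn0 s_mem andbC.
Qed.

Lemma eq_evsum n (P Q : pred nat) :
  (forall x, (x < n)%N -> P x = Q x) -> evsum b n P = evsum b n Q.
Proof. by move=> PQ; apply: eq_bigl => i; apply: PQ. Qed.

Lemma evsumUI n (P Q : pred nat) :
  evsum b n P + evsum b n Q =
  evsum b n (fun x => P x || Q x) + evsum b n (fun x => P x && Q x).
Proof.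
rewrite /evsum [X in X + _ = _]big_mkcond [X in _ + X = _]big_mkcond.
rewrite [X in _ = X + _]big_mkcond [X in _ = _ + X]big_mkcond -!big_split.
by apply: eq_bigr => i _; case: (P i); case: (Q i); rewrite /= ?addr0 ?add0r.
Qed.

Lemma evsum_mulr n Q (A B : pred nat) : (0 < n)%N -> b ^+ n = 1 -> coprime Q n ->
  (forall x, (x < n)%N -> B (x * Q %% n)%N = A x) ->
  \sum_(i < n | A i) b ^+ (i * Q)%N = evsum b n B.
Proof.
case: n => // n _ bn coQ AB; pose h (i : 'I_n.+1) : 'I_n.+1 := inZp (i * Q).
have h_inj : injective h.
  move=> i j /(congr1 val) /eqP; rewrite /= eqn_modMr_coprime // !modn_small //.
  by move/eqP/val_inj.
rewrite /evsum [RHS](reindex_inj h_inj); apply: eq_big => i /=; first by rewrite AB.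
by rewrite expr_mod.
Qed.

Lemma evsum_pchar_exp n Q (A B : pred nat) :
  [pchar F].-nat Q -> (0 < n)%N -> b ^+ n = 1 -> coprime Q n ->
  (forall x, (x < n)%N -> B (x * Q %% n)%N = A x) ->
  evsum b n A ^+ Q = evsum b n B.
Proof.
move=> QP *; rewrite /evsum expr_sum_pchar //.
by under eq_bigr do rewrite -exprM; apply: evsum_mulr.
Qed.

Lemma evsum_dvdn d m : (0 < d)%N -> (b ^+ d) ^+ m = 1 -> b ^+ d != 1 ->
  evsum b (m * d)%N (dvdn d) = 0.
Proof.
move=> d_gt0 bdm bd1; rewrite (@evsum_seq _ _ [seq (k * d)%N | k <- iota 0 m]).
- rewrite big_map -[RHS](sum_expr_eq0 bdm bd1) -(big_mkord xpredT (fun k => (b ^+ d) ^+ k)).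
  by rewrite /index_iota subn0; apply: eq_bigr => k _ /=; rewrite mulnC exprM.
- by rewrite map_inj_uniq ?iota_uniq // => i j /eqP; rewrite eqn_pmul2r // => /eqP.
by move=> x; rewrite mem_map_muln // mem_iota add0n ltn_divLR // andbC.
Qed.

End EvaluationSums.

Section WhitemanClasses.

Variables n1 n2 g u : nat.
Hypotheses (n1_prime : prime n1) (n2_prime : prime n2) (n1_neq_n2 : n1 != n2).
Hypothesis gcd_n1_n2 : gcdn n1.-1 n2.-1 = 6.
Hypotheses (g_primroot1 : is_primroot g n1) (g_primroot2 : is_primroot g n2).
Hypotheses (u_mod_n1 : u = g %[mod n1]) (u_mod_n2 : u = 1 %[mod n2]).

Local Notation n := (n1 * n2).
Local Notation e := (wh_e n1 n2).
Local Notation D := (whD n1 n2 g u).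
Local Notation N1 := (whN1 n1 n2).

Let coprime_n1_n2 : coprime n1 n2.
Proof. by rewrite prime_coprime // dvdn_prime2. Qed.

Let n_gt1 : 1 < n.
Proof. by rewrite -(muln1 1) ltn_mul ?prime_gt1. Qed.

Let dvd6_n1 : 6 %| n1.-1. Proof. by rewrite -gcd_n1_n2 dvdn_gcdl. Qed.
Let dvd6_n2 : 6 %| n2.-1. Proof. by rewrite -gcd_n1_n2 dvdn_gcdr. Qed.

Lemma wh_eE : e = lcmn n1.-1 n2.-1.
Proof. by rewrite /wh_e /lcmn gcd_n1_n2. Qed.

Let wh_e_gt0 : 0 < e.
Proof. by rewrite wh_eE lcmn_gt0 !ltn_predRL !prime_gt1. Qed.

Lemma expg_wh_e : g ^ e = 1 %[mod n].
Proof.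
apply/eqP; rewrite chinese_remainder // -(expn0 g) !primroot_expE // wh_eE !mod0n.
by rewrite -!/(dvdn _ _) dvdn_lcml dvdn_lcmr.
Qed.

Lemma totient_wh : totient n = 6 * e.
Proof.
rewrite totient_coprime // !totient_prime //.
by rewrite /wh_e [RHS]mulnC divnK // dvdn_mulr.
Qed.

Lemma coprime_g_n : coprime g n.
Proof. by rewrite coprimeMr !primroot_coprime. Qed.

Lemma coprime_u_n : coprime u n.
Proof.
rewrite coprimeMr -coprime_modl u_mod_n1 coprime_modl primroot_coprime //=.
by rewrite -coprime_modl u_mod_n2 coprime_modl coprime1n.
Qed.

Lemma coprime_gu_n w k : coprime (g ^ w * u ^ k) n.
Proof. by rewrite coprimeMl !coprimeXl ?coprime_g_n ?coprime_u_n. Qed.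

Let u_exp_mod_n1 i : u ^ i = g ^ i %[mod n1].
Proof. by rewrite -modnXm u_mod_n1 modnXm. Qed.

Let u_exp_mod_n2 i : u ^ i = 1 %[mod n2].
Proof. by rewrite -modnXm u_mod_n2 modnXm exp1n. Qed.

Let mul_u_exp_mod_n1 a i : a * u ^ i = a * g ^ i %[mod n1].
Proof. by rewrite -modnMmr u_exp_mod_n1 modnMmr. Qed.

Let mul_u_exp_mod_n2 a i : a * u ^ i = a %[mod n2].
Proof. by rewrite -modnMmr u_exp_mod_n2 modnMmr muln1. Qed.

Lemma classes_eqmod s t i j : g ^ s * u ^ i = g ^ t * u ^ j %[mod n] ->
  s + i = t + j %[mod n1.-1] /\ s = t %[mod n2.-1].
Proof.
move/eqP; rewrite chinese_remainder // => /andP [E1 E2]; split; apply/eqP.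
  by rewrite !mul_u_exp_mod_n1 -!expnD primroot_expE in E1.
by rewrite !mul_u_exp_mod_n2 primroot_expE in E2.
Qed.

Lemma class_index_eqmod s t i j : g ^ s * u ^ i = g ^ t * u ^ j %[mod n] ->
  i = j %[mod 6].
Proof.
case/classes_eqmod => /(eqmod_dvd dvd6_n1) E1 /(eqmod_dvd dvd6_n2) E2.
by apply/eqP; rewrite -(eqn_modDl s) E1 -modnDml -E2 modnDml.
Qed.

Lemma class_exp_inj s t i : s < e -> t < e ->
  g ^ s * u ^ i = g ^ t * u ^ i %[mod n] -> s = t.
Proof.
move=> s_lt t_lt /classes_eqmod [/eqP E1 /eqP E2]; rewrite eqn_modDr in E1.
by have := chinese_remainder_lcm n1.-1 n2.-1 s t; rewrite E1 E2 -wh_eE !modn_small // => /eqP.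
Qed.

Lemma u_exp6 : exists c, u ^ 6 = g ^ c %[mod n].
Proof.
have [a ea] : exists a, n1.-1 = a * 6 by exists (n1.-1 %/ 6); rewrite divnK.
have [b eb] : exists b, n2.-1 = b * 6 by exists (n2.-1 %/ 6); rewrite divnK.
have co_ab : coprime a b.
  by rewrite /coprime -(eqn_pmul2r (isT : 0 < 6)) muln_gcdl -ea -eb gcd_n1_n2.
(* c must be 6 modulo n1 - 1 and 0 modulo n2 - 1, which is solvable as gcd = 6. *)
exists (chinese a b 1 0 * 6); apply/eqP; rewrite chinese_remainder //; apply/andP; split.
  rewrite u_exp_mod_n1 primroot_expE // ea -{1}(mul1n 6) -!muln_modl //.
  by rewrite chinese_modl.
rewrite u_exp_mod_n2 -[X in X %% n2 == _](expn0 g) primroot_expE //.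
by rewrite eb -{1}(mul0n 6) -!muln_modl // chinese_modr.
Qed.

Lemma memD i x :
  reflect (x < n /\ exists s, x = g ^ s * u ^ i %[mod n]) (x \in D i).
Proof.
apply: (iffP mapP) => [[s _ ->]|[x_lt [s xE]]].
  by split; [rewrite ltn_mod ltnW | exists s; rewrite modn_mod].
exists (s %% e); first by rewrite mem_iota ltn_mod wh_e_gt0.
by rewrite -(modn_small x_lt) xE -modnMml (expn_mod_order s expg_wh_e) modnMml.
Qed.

Lemma coprime_D i x : x \in D i -> coprime x n.
Proof.
by case/memD => _ [s xE]; rewrite -coprime_modl xE coprime_modl coprime_gu_n.
Qed.

Lemma memD_modn Q i : Q %% n \in D i -> exists s, Q = g ^ s * u ^ i %[mod n].
Proof. by case/memD => _ [s QE]; exists s; rewrite -QE modn_mod. Qed.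

Lemma memD_add6 i x : (x \in D (i + 6)) = (x \in D i).
Proof.
have [c u6] := u_exp6.
have mul_u6 a : a * u ^ 6 = a * g ^ c %[mod n] by rewrite -modnMmr u6 modnMmr.
apply/memD/memD => -[x_lt [s xE]]; split=> //.
  by exists (s + c); rewrite xE expnD mulnA mul_u6 expnD mulnAC.
have inv_u6 : g ^ (c * e.-1) * u ^ 6 = 1 %[mod n].
  by rewrite mul_u6 -expnD -mulnSr prednK // mulnC expnM -modnXm expg_wh_e modnXm exp1n.
exists (s + c * e.-1).
by rewrite xE !expnD mulnACA -[in RHS]modnMmr inv_u6 modnMmr muln1.
Qed.

Lemma memD_mod6 i x : (x \in D (i %% 6)) = (x \in D i).
Proof.
rewrite {2}(divn_eq i 6) addnC; elim: (i %/ 6) => [|m IHm]; first by rewrite mul0n addn0.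
by rewrite mulSnr addnA memD_add6.
Qed.

Lemma memD_eqmod i j x : i = j %[mod 6] -> (x \in D i) = (x \in D j).
Proof. by move=> ij; rewrite -memD_mod6 ij memD_mod6. Qed.

Lemma memD_mulr i k w x y : x \in D i -> y < n ->
  y = x * (g ^ w * u ^ k) %[mod n] -> y \in D (i + k).
Proof.
case/memD => _ [s xE] y_lt yE; apply/memD; split=> //; exists (s + w).
by rewrite yE -modnMml xE modnMml !expnD mulnACA.
Qed.

Lemma D_disjoint i j x : x \in D i -> x \in D j -> i = j %[mod 6].
Proof.
case/memD => _ [s xs] /memD [_ [t xt]].
by apply: (class_index_eqmod (s := s) (t := t)); rewrite -xs -xt.
Qed.

Lemma D_cover x : x < n -> coprime x n -> exists2 i, i < 6 & x \in D i.
Proof.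
pose L := [seq (g ^ s * u ^ i) %% n | i <- iota 0 6, s <- iota 0 e].
have L_uniq : uniq L.
  apply: allpairs_uniq; [exact: iota_uniq | exact: iota_uniq |].
  move=> -[i1 s1] [j1 t1] mem_is mem_jt.
  move: mem_is mem_jt => /allpairsP [[i s] [+ + [-> ->]]] /allpairsP [[j t] [+ + [-> ->]]].
  rewrite !mem_iota /= => i_lt s_lt j_lt t_lt E.
  have /eqP : i = j %[mod 6] by apply: class_index_eqmod E.
  rewrite !modn_small // => /eqP ij; rewrite ij in E *.
  by rewrite (class_exp_inj s_lt t_lt E).
pose U := [seq y <- iota 0 n | coprime y n].
have L_sub_U : {subset L <= U}.
  move=> y /allpairsP [[i s] /= [_ _ ->]].
  by rewrite mem_filter mem_iota add0n ltn_mod (ltnW n_gt1) coprime_modl coprime_gu_n.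
have size_U : size U = size L.
  by rewrite size_allpairs !size_iota size_filter count_coprime_iota totient_wh.
have [_ L_eq_U] := uniq_min_size L_uniq L_sub_U (eq_leq size_U).
move=> x_lt co_x; have : x \in L by rewrite L_eq_U mem_filter mem_iota add0n co_x x_lt.
case/allpairsP => -[i s] [+ _ ->]; rewrite mem_iota => i_lt.
by exists i => //; apply/memD; split; [rewrite ltn_mod ltnW | exists s; rewrite modn_mod].
Qed.

Lemma memN1 x : (x \in N1) = [&& 0 < x, x < n & n1 %| x].
Proof.
have n1_gt0 := prime_gt0 n1_prime; have n2_gt0 := prime_gt0 n2_prime.
apply/mapP/and3P => [[k] | [x_gt0 x_lt /dvdnP [k xk]]].
  rewrite mem_iota add1n (prednK n2_gt0) => /andP [k_gt0 k_lt] ->.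
  by split; rewrite ?muln_gt0 ?k_gt0 ?n1_gt0 ?dvdn_mull // mulnC ltn_pmul2l.
exists k => //; rewrite mem_iota add1n (prednK n2_gt0).
rewrite xk muln_gt0 n1_gt0 andbT in x_gt0.
by rewrite xk mulnC ltn_pmul2l // in x_lt; rewrite x_gt0 x_lt.
Qed.

Lemma N1_uniq : uniq N1.
Proof.
rewrite map_inj_uniq ?iota_uniq // => i j /eqP.
by rewrite eqn_pmul2r ?prime_gt0 // => /eqP.
Qed.

Lemma memN1_mulr Q x : coprime Q n -> x < n -> (x * Q %% n \in N1) = (x \in N1).
Proof.
move=> coQ x_lt; have := coQ; rewrite coprimeMr => /andP [coQ1 _].
have dvd_n1 : (n1 %| x * Q %% n) = (n1 %| x).
  by rewrite /dvdn modn_dvdm ?dvdn_mulr // -/(dvdn _ _) Gauss_dvdl // coprime_sym.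
have pos : (0 < x * Q %% n) = (0 < x).
  have [->|x_gt0] := posnP x; first by rewrite mul0n mod0n.
  rewrite lt0n -/(dvdn _ _) Gauss_dvdl 1?coprime_sym //.
  by apply: contraTN x_lt => /(dvdn_leq x_gt0); rewrite leqNgt.
by rewrite !memN1 ltn_mod (ltnW n_gt1) x_lt dvd_n1 pos.
Qed.

Lemma memD_mulrE i k w Q x : Q = g ^ w * u ^ k %[mod n] -> x < n ->
  (x * Q %% n \in D (i + k)) = (x \in D i).
Proof.
move=> QE x_lt; set y := x * Q %% n.
have y_lt : y < n by rewrite ltn_mod ltnW.
have yE : y = x * (g ^ w * u ^ k) %[mod n] by rewrite modn_mod -modnMmr QE modnMmr.
apply/idP/idP => [y_in | x_in]; last exact: memD_mulr x_in y_lt yE.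
have /andP [co_x _] : coprime x n && coprime Q n.
  by rewrite -coprimeMl -coprime_modl (coprime_D y_in).
have [j _ x_in] := D_cover x_lt co_x.
have /eqP := D_disjoint y_in (memD_mulr x_in y_lt yE); rewrite eqn_modDr => /eqP ij.
by rewrite (memD_eqmod _ ij).
Qed.

(* The polynomials S, T and M are supported on whSupp 0, 1 and 2. *)
Definition whSupp a x := [|| x \in N1, x \in D a, x \in D a.+1 | x \in D a.+2].

Lemma whSupp_eqmod a b : a = b %[mod 6] -> whSupp a =1 whSupp b.
Proof.
have eqmodS i j : i = j %[mod 6] -> i.+1 = j.+1 %[mod 6].
  by move/eqP; rewrite -(eqn_modDr 1) !addn1 => /eqP.
move=> ab x; have ab1 := eqmodS _ _ ab; have ab2 := eqmodS _ _ ab1.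
by rewrite /whSupp (memD_eqmod x ab) (memD_eqmod x ab1) (memD_eqmod x ab2).
Qed.

Lemma whSupp_mulr a k w Q x : Q = g ^ w * u ^ k %[mod n] -> x < n ->
  whSupp (a + k) (x * Q %% n) = whSupp a x.
Proof.
move=> QE x_lt; have coQ : coprime Q n by rewrite -coprime_modl QE coprime_modl coprime_gu_n.
by rewrite /whSupp memN1_mulr // -!addSn !(memD_mulrE _ QE).
Qed.

Lemma N1_or_coprime x : x < n -> (x \in N1) || coprime x n = ~~ (n2 %| x).
Proof.
move=> x_lt; rewrite memN1 x_lt coprimeMr !(coprime_sym x) !prime_coprime //=.
case n2x: (n2 %| x); rewrite /= ?andbF ?orbF.
  apply/negP => /andP [x_gt0 n1x]; have : n %| x by rewrite Gauss_dvd // n1x n2x.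
  by move/(dvdn_leq x_gt0); rewrite leqNgt x_lt.
case: (n1 %| x); rewrite /= ?andbT ?orbF ?orbT // lt0n.
by apply: contraFneq n2x => ->; apply: dvdn0.
Qed.

Lemma whSupp_union a x : x < n -> whSupp a x || whSupp a.+3 x = ~~ (n2 %| x).
Proof.
move=> x_lt; rewrite -N1_or_coprime // /whSupp; case: (x \in N1) => //=.
apply/idP/idP => [/orP [] /or3P [] /coprime_D // | co_x].
have [i _ x_i] := D_cover x_lt co_x.
have [t t_lt it] : exists2 t, t < 6 & i = a + t %[mod 6].
  by exists ((i + (6 - a %% 6)) %% 6); [rewrite ltn_mod | clear -i a; lia].
case: t t_lt it => [|[|[|[|[|[|]]]]]] // _ it.
all: by rewrite (memD_eqmod x it) ?addnS addn0 in x_i; rewrite x_i ?orbT.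
Qed.

Lemma whSupp_inter a x : whSupp a x && whSupp a.+3 x = (x \in N1).
Proof.
rewrite /whSupp; case: (x \in N1) => //=.
by apply/negP => /andP [/or3P [] xi /or3P [] xj]; move: (D_disjoint xi xj); clear -a; lia.
Qed.

Section ClassSums.

Variables (F : fieldType) (beta : F).
Local Open Scope ring_scope.
Hypothesis beta_prim : n.-primitive_root beta.

Let beta_n : beta ^+ n = 1. Proof. exact: prim_expr_order. Qed.

Let beta_n1 : beta ^+ n1 != 1.
Proof.
rewrite -(prim_order_dvd beta_prim); apply/negP => /(dvdn_leq (prime_gt0 n1_prime)).
by rewrite -{2}(muln1 n1) leq_pmul2l ?prime_gt0 // leqNgt prime_gt1.
Qed.

Let beta_n2 : beta ^+ n2 != 1.
Proof.
rewrite -(prim_order_dvd beta_prim); apply/negP => /(dvdn_leq (prime_gt0 n2_prime)).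
by rewrite -{2}(mul1n n2) leq_pmul2r ?prime_gt0 // leqNgt prime_gt1.
Qed.

Lemma evsum_N1 : evsum beta n (fun x => x \in N1) = -1.
Proof.
rewrite (evsum_seq _ N1_uniq) => [|x]; last by rewrite andb_idl // memN1 => /and3P [].
have beta_n1n2 : (beta ^+ n1) ^+ n2 = 1 by rewrite -exprM.
have := sum_expr_eq0 beta_n1n2 beta_n1.
rewrite -(big_mkord xpredT) /index_iota subn0 -(prednK (prime_gt0 n2_prime)) big_cons.
rewrite expr0 /whN1 big_map => /eqP; rewrite addrC addr_eq0 => /eqP <-.
by apply: eq_bigr => k _; rewrite mulnC exprM.
Qed.

Lemma evsum_ndvd_n2 : evsum beta n (fun x => ~~ (n2 %| x)%N) = 0.
Proof.
have beta1 : beta != 1 by apply: contraNneq beta_n1 => ->; rewrite expr1n.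
have := sum_expr_eq0 beta_n beta1; rewrite (bigID (fun i : 'I_n => n2 %| i)%N) /=.
have -> : \sum_(i < n | (n2 %| i)%N) beta ^+ i = 0.
  by apply: evsum_dvdn (prime_gt0 n2_prime) _ beta_n2; rewrite -exprM mulnC.
by rewrite add0r.
Qed.

Lemma evsum_whSupp_exp a k w Q : [pchar F].-nat Q -> Q = g ^ w * u ^ k %[mod n] ->
  evsum beta n (whSupp a) ^+ Q = evsum beta n (whSupp (a + k)).
Proof.
move=> QP QE; apply: evsum_pchar_exp => //.
- exact: ltnW n_gt1.
- by rewrite -coprime_modl QE coprime_modl coprime_gu_n.
- by move=> x x_lt; apply: whSupp_mulr QE x_lt.
Qed.

Lemma evsum_whSupp_add3 a :
  evsum beta n (whSupp a) + evsum beta n (whSupp a.+3) = -1.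
Proof.
rewrite evsumUI (eq_evsum _ (whSupp_union a)) (eq_evsum _ (fun x _ => whSupp_inter a x)).
by rewrite evsum_ndvd_n2 evsum_N1 add0r.
Qed.

Variable q : nat.
Hypothesis q_pchar : [pchar F].-nat q.

Local Notation X a := (evsum beta n (whSupp a)).

Let q3_pchar : [pchar F].-nat (q ^ 3)%N. Proof. by rewrite pnatX q_pchar. Qed.

Let class_q3 i : (q %% n)%N \in D i -> exists s, (q ^ 3 = g ^ s * u ^ (i * 3) %[mod n])%N.
Proof.
case/memD_modn => s qE; exists (s * 3)%N.
by rewrite -modnXm qE modnXm expnMn !expnM.
Qed.

Lemma evsum_whSupp_frobenius a :
  [/\ (q %% n)%N \in D 1%N \/ (q %% n)%N \in D 3%N \/ (q %% n)%N \in D 5%N ->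
        X a != -1 /\ X a != 0,
      (q %% n)%N \in D 0%N -> X a ^+ q = X a
    & (q %% n)%N \in D 2%N \/ (q %% n)%N \in D 4%N -> X a ^+ (q ^ 3) = X a].
Proof.
have fixed Q k w : [pchar F].-nat Q -> (Q = g ^ w * u ^ k %[mod n])%N ->
    (k = 0 %[mod 6])%N -> X a ^+ Q = X a.
  move=> QP QE k0; rewrite (evsum_whSupp_exp _ QP QE); apply: eq_bigl => i.
  by apply: whSupp_eqmod; rewrite -modnDmr k0 addn0.
split.
- move=> q_odd; apply: (@add_expr_eqN1_nontrivial _ _ (q ^ 3)).
    by case/andP: q_pchar => q_gt0 _; rewrite expn_gt0 q_gt0.
  have [i [s qE] i3] : exists2 i, (exists s, q ^ 3 = g ^ s * u ^ (i * 3) %[mod n])%N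
      & (i * 3 = 3 %[mod 6])%N.
    case: q_odd => [/class_q3 | [/class_q3 | /class_q3]] qE.
    - by exists 1%N.
    - by exists 3%N.
    - by exists 5%N.
  rewrite (evsum_whSupp_exp _ q3_pchar qE) -(evsum_whSupp_add3 a).
  by congr (_ + _); apply: eq_bigl => j; apply: whSupp_eqmod; rewrite -modnDmr i3 modnDmr addn3.
- by case/memD_modn => s qE; apply: (fixed q 0%N s).
- by case=> /class_q3 [s qE]; apply: (fixed _ _ s q3_pchar qE).
Qed.

End ClassSums.

End WhitemanClasses.

Local Open Scope ring_scope.

Theorem lemma5 (n1 n2 g u q m : nat) (F : finFieldType) (alpha : F) :
  prime n1 -> prime n2 -> odd n1 -> odd n2 -> n1 != n2 ->
  gcdn n1.-1 n2.-1 = 6%N ->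
  is_primroot g n1 -> is_primroot g n2 ->
  u = g %[mod n1] -> u = 1 %[mod n2] ->
  (exists p k, [/\ prime p, (0 < k)%N & q = (p ^ k)%N]) ->
  coprime q (n1 * n2) ->
  is_ord_mod q (n1 * n2) m ->
  #|F| = (q ^ m)%N ->
  ((q ^ m).-1).-primitive_root alpha ->
  let n := (n1 * n2)%N in
  let beta := alpha ^+ ((q ^ m).-1 %/ n) in
  let D := whD n1 n2 g u in
  let N1 := whN1 n1 n2 in
  let S := evsum beta n (fun i => [|| i \in N1, i \in D 0%N, i \in D 1%N | i \in D 2%N]) in
  let T := evsum beta n (fun i => [|| i \in N1, i \in D 1%N, i \in D 2%N | i \in D 3%N]) in
  let M := evsum beta n (fun i => [|| i \in N1, i \in D 2%N, i \in D 3%N | i \in D 4%N]) in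
  [/\ (((q %% n)%N \in D 1%N \/ (q %% n)%N \in D 3%N \/ (q %% n)%N \in D 5%N) ->
        [/\ S != -1 /\ S != 0, T != -1 /\ T != 0 & M != -1 /\ M != 0]),
      ((q %% n)%N \in D 0%N ->
        [/\ S ^+ q = S, T ^+ q = T & M ^+ q = M])
    & (((q %% n)%N \in D 2%N \/ (q %% n)%N \in D 4%N) ->
        [/\ S ^+ (q ^ 3) = S, T ^+ (q ^ 3) = T & M ^+ (q ^ 3) = M])].
Proof.
move=> n1_pr n2_pr _ _ n1_neq_n2 gcd6 g_pr1 g_pr2 u_n1 u_n2 [p [k [p_pr _ qE]]] _.
move=> [_ [qm1 _]] cardF alpha_prim n beta D N1 S T M.
have beta_prim : n.-primitive_root beta.
  apply: (dvdn_prim_root alpha_prim); rewrite -subn1 -eqn_mod_dvd; first exact/eqP.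
  by rewrite qE -expnM expn_gt0 prime_gt0.
have q_pchar : [pchar F].-nat q.
  have p_char : p \in [pchar F] by apply: (card_finPcharP _ p_pr); rewrite cardF qE -expnM.
  by rewrite qE pnatX pnatE ?p_char.
have frob := evsum_whSupp_frobenius n1_pr n2_pr n1_neq_n2 gcd6 g_pr1 g_pr2 u_n1 u_n2
  beta_prim q_pchar.
have [S1 S2 S3] := frob 0%N; have [T1 T2 T3] := frob 1%N; have [M1 M2 M3] := frob 2%N.
by split=> hq; split; [exact: S1 | exact: T1 | exact: M1 | exact: S2 | exact: T2
  | exact: M2 | exact: S3 | exact: T3 | exact: M3].
Qed.
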